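(* Let $a,b,c\in[0,1]$, each different from $\frac12$, and define $f=f_{a,b,c}:[0,1]\to[0,1]$ by $$f(x)=\begin{cases}(1-2a)x^2+2ax, & x\in[0,\frac13],\\ (1-2b)x^2+2bx, & x\in(\frac13,\frac23),\\ (1-2c)x^2+2cx, & x\in[\frac23,1].\end{cases}$$ Let $f^n$ denote the $n$-fold composition and $x^{(n)}=f^n(x^{(0)})$. Then: 1. The set of fixed points of $f$ is $\{0,1\}$. 2. If $a,b,c<\frac12$, then $\lim_{n\to\infty}x^{(n)}=0$ for all $x^{(0)}\in[0,1)$. 3. If $a<\frac12$, $b<\frac12$, $c>\frac12$, then $\lim_{n\to\infty}x^{(n)}=0$ if $x^{(0)}\in[0,\frac23)$ and $\lim_{n\to\infty}x^{(n)}=1$ if $x^{(0)}\in[\frac23,1]$. 4. If $a<\frac12$, $b>\frac12$, $c<\frac12$, then $\lim_{n\to\infty}x^{(n)}=0$ for all $x^{(0)}\in[0,\frac13]$. 5. If $a<\frac12$, $b>\frac12$, $c<\frac12$, let $A_1=[0,\frac13]$, $A_2=(\frac13,\frac49(1+c))\cup(\frac49(1+b),1)$, $A_3=[\frac49(1+c),\frac49(1+b)]$. Then (i) $\lim_{n\to\infty}x^{(n)}=0$ for every $x^{(0)}\in A_1$; (ii) for every $x_0\in A_2$ there exists $n_0=n_0(x_0)\in\mathbb N$ such that $f^n(x_0)\in A_3$ for all $n>n_0$; (iii) $f(A_3)\subset A_3$. 6. If $a<\frac12$, $b>\frac12$, $c>\frac12$, then $\lim_{n\to\infty}x^{(n)}=0$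 if $x^{(0)}\in[0,\frac13]$ and $\lim_{n\to\infty}x^{(n)}=1$ if $x^{(0)}\in(\frac13,1]$. 7. If $a>\frac12$, $b<\frac12$, $c<\frac12$, let $B_1=(0,\frac19(1+4b))\cup(\frac19(1+4a),1)$ and $B_2=[\frac19(1+4b),\frac19(1+4a)]$. Then (i) for every $x_0\in B_1$ there exists $n_0=n_0(x_0)\in\mathbb N$ such that $f^n(x_0)\in B_2$ for all $n>n_0$; (ii) $f(B_2)\subset B_2$. 8. If $a>\frac12$, $b<\frac12$, $c>\frac12$, let $C_1=(0,\frac19(1+4b))\cup(\frac19(1+4a),\frac23)$, $C_2=[\frac19(1+4b),\frac19(1+4a)]$, $C_3=[\frac23,1]$. Then (i) for every $x_0\in C_1$ there exists $n_0=n_0(x_0)\in\mathbb N$ such that $f^n(x_0)\in C_2$ for all $n>n_0$; (ii) $f(C_2)\subset C_2$; (iii) $\lim_{n\to\infty}x^{(n)}=1$ for every $x^{(0)}\in C_3$. 9. If $a,b,c>\frac12$, then $\lim_{n\to\infty}x^{(n)}=1$ for all $x^{(0)}\in(0,1]$.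
   Context: Here all parameters lie in $[0,1]$, so e.g. ''$a<\frac12$'' means $0\le a<\frac12$ and ''$a>\frac12$'' means $\frac12<a\le1$. The map is the reduction to $[0,1]$ (via $y=1-x$) of the quadratic stochastic operator $x'=x^2+2p(x)xy$, $y'=2(1-p(x))xy+y^2$ with $p(x)=a$ for $x\le\frac13$, $b$ for $\frac13<x<\frac23$, $c$ for $x\ge\frac23$. *)

From Stdlib Require Import Reals Lra.
Open Scope R_scope.

Definition pval (a b c x : R) : R :=
  if Rle_dec x (1/3) then a else if Rlt_dec x (2/3) then b else c.

Definition fabc (a b c x : R) : R :=
  (1 - 2 * pval a b c x) * x ^ 2 + 2 * pval a b c x * x.

Fixpoint fiter (a b c : R) (n : nat) (x : R) : R :=
  match n with
  | O => x
  | S m => fabc a b c (fiter a b c m x)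
  end.

(* Writing f(x) = x + (2p - 1) x (1 - x), where p is the parameter active at x, every branch
   moves x toward 0 if p < 1/2 and toward 1 if p > 1/2, by an amount proportional to x (1 - x).
   This gives the fixed points, and wherever all active branches push the same way the orbit
   converges at a geometric rate.  Where two branches push toward each other across a breakpoint
   t (t = 2/3 for A3, t = 1/3 for B2), the interval between the images of t under the two branches
   is invariant because each branch is monotone and moves points toward t; an orbit started on
   either side of that interval moves by a uniform step until it falls into it. *)

From Stdlib Require Import Reals Lra Classical.
Open Scope R_scope.

Definition qmap (p x : R) : R := (1 - 2 * p) * x ^ 2 + 2 * p * x.

Lemma fabc_qmap a b c x : fabc a b c x = qmap (pval a b c x) x.
Proof. reflexivity. Qed.

Lemma qmap_logistic p x : qmap p x = x + (2 * p - 1) * (x * (1 - x)).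
Proof. unfold qmap; ring. Qed.

Lemma qmap_third p : qmap p (1/3) = 1/9 * (1 + 4 * p).
Proof. unfold qmap; field. Qed.

Lemma qmap_two_thirds p : qmap p (2/3) = 4/9 * (1 + p).
Proof. unfold qmap; field. Qed.

Lemma qmap_ge_sq p x : 0 <= p -> 0 <= x <= 1 -> x ^ 2 <= qmap p x.
Proof.
  intros Hp Hx.
  assert (E : qmap p x - x ^ 2 = 2 * p * (x * (1 - x))) by (unfold qmap; ring).
  assert (0 <= p * (x * (1 - x))) by (apply Rmult_le_pos; nra).
  lra.
Qed.

Lemma qmap_le_1 p x : p <= 1 -> 0 <= x <= 1 -> qmap p x <= 1.
Proof.
  intros Hp Hx.
  assert (E : 1 - qmap p x = (1 - x) ^ 2 + 2 * (1 - p) * (x * (1 - x)))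
    by (unfold qmap; ring).
  assert (0 <= (1 - p) * (x * (1 - x))) by (apply Rmult_le_pos; nra).
  nra.
Qed.

Lemma qmap_le_param p q x : p <= q -> 0 <= x <= 1 -> qmap p x <= qmap q x.
Proof.
  intros Hpq Hx. rewrite !qmap_logistic.
  assert (0 <= (q - p) * (x * (1 - x))) by (apply Rmult_le_pos; nra).
  nra.
Qed.

Lemma qmap_le_mono p x y : 0 <= p <= 1 -> 0 <= x <= y -> y <= 1 -> qmap p x <= qmap p y.
Proof.
  intros Hp Hxy Hy.
  assert (E : qmap p y - qmap p x
              = (y - x) * ((1 - p) * (x + y) + p * (2 - x - y))) by (unfold qmap; ring).
  assert (0 <= (1 - p) * (x + y) + p * (2 - x - y)) by nra.
  assert (0 <= (y - x) * ((1 - p) * (x + y) + p * (2 - x - y))) by (apply Rmult_le_pos; lra).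
  lra.
Qed.

Lemma qmap_ge_step p m x : 1/2 <= p -> m <= x * (1 - x) -> x + (2 * p - 1) * m <= qmap p x.
Proof. intros Hp Hm. rewrite qmap_logistic. nra. Qed.

Lemma qmap_le_step p m x : p <= 1/2 -> m <= x * (1 - x) -> qmap p x <= x - (1 - 2 * p) * m.
Proof. intros Hp Hm. rewrite qmap_logistic. nra. Qed.

Lemma qmap_up_branch p t x : 1/2 <= p <= 1 -> 0 <= x <= t -> t <= 1 ->
  x <= qmap p x <= qmap p t.
Proof.
  intros Hp Hx Ht. split.
  - pose proof (qmap_ge_step p 0 x). nra.
  - apply qmap_le_mono; lra.
Qed.

Lemma qmap_down_branch p t x : 0 <= p <= 1/2 -> 0 <= t <= x -> x <= 1 ->
  qmap p t <= qmap p x <= x.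
Proof.
  intros Hp Hx Ht. split.
  - apply qmap_le_mono; lra.
  - pose proof (qmap_le_step p 0 x). nra.
Qed.

Lemma x_1mx_ge lo up x : 0 <= lo <= x -> x <= up <= 1 -> lo * (1 - up) <= x * (1 - x).
Proof. intros. nra. Qed.

Lemma pval_ind (P : R -> Prop) a b c x :
  (x <= 1/3 -> P a) -> (1/3 < x < 2/3 -> P b) -> (2/3 <= x -> P c) -> P (pval a b c x).
Proof.
  intros Ha Hb Hc. unfold pval.
  destruct (Rle_dec x (1/3)); [|destruct (Rlt_dec x (2/3))].
  - apply Ha; lra.
  - apply Hb; lra.
  - apply Hc; lra.
Qed.

Lemma pval_first a b c x : x <= 1/3 -> pval a b c x = a.
Proof. intros Hx. apply pval_ind; intros; lra. Qed.

Lemma pval_mid a b c x : 1/3 < x < 2/3 -> pval a b c x = b.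
Proof. intros Hx. apply pval_ind; intros; lra. Qed.

Lemma pval_last a b c x : 2/3 <= x -> pval a b c x = c.
Proof. intros Hx. apply pval_ind; intros; lra. Qed.

Lemma fabc_fixed_iff a b c x : a <> 1/2 -> b <> 1/2 -> c <> 1/2 ->
  fabc a b c x = x <-> x = 0 \/ x = 1.
Proof.
  intros Ha Hb Hc.
  rewrite fabc_qmap, qmap_logistic.
  assert (Hp : 2 * pval a b c x - 1 <> 0) by (apply pval_ind; intros; lra).
  split.
  - intros E.
    assert (E2 : (2 * pval a b c x - 1) * (x * (1 - x)) = 0) by lra.
    destruct (Rmult_integral _ _ E2) as [|E3]; [contradiction|].
    destruct (Rmult_integral _ _ E3); [left | right]; lra.
  - intros [-> | ->]; ring.
Qed.

Lemma Un_cv_0_geometric (u : nat -> R) (q : R) :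
  0 <= q < 1 -> (forall n, 0 <= u n <= q ^ n) -> Un_cv u 0.
Proof.
  intros Hq Hu eps Heps.
  destruct (pow_lt_1_zero q ltac:(rewrite Rabs_right; lra) eps Heps) as [N HN].
  exists N. intros n Hn.
  specialize (HN n Hn). specialize (Hu n).
  unfold R_dist. rewrite Rminus_0_r, Rabs_right by lra.
  rewrite Rabs_right in HN by (apply Rle_ge, pow_le; lra).
  lra.
Qed.

Section Orbit.

Variables (g : R -> R) (u : nat -> R).
Hypothesis u_succ : forall n, u (S n) = g (u n).

Lemma orbit_cv0 k : 0 <= u 0 < 1 -> 0 < k <= 1 ->
  (forall x, 0 <= x <= u 0 -> 0 <= g x <= x - k * x * (1 - x)) ->
  Un_cv u 0.
Proof.
  intros Hu0 Hk Hstep.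
  set (q := 1 - k * (1 - u 0)).
  assert (Hq : 0 <= q < 1) by (unfold q; nra).
  (* [g x <= x - k x (1 - x) <= q x] as long as [x <= u 0] *)
  assert (Hbound : forall n, 0 <= u n <= u 0 /\ u n <= q ^ n * u 0).
  { induction n as [|n [Hn Hgeo]]; [simpl; lra|].
    rewrite u_succ. simpl.
    destruct (Hstep (u n) Hn) as [Hg0 Hg].
    assert (k * u n * (1 - u 0) <= k * u n * (1 - u n))
      by (apply Rmult_le_compat_l; nra).
    assert (q * u n <= q * (q ^ n * u 0)) by (apply Rmult_le_compat_l; lra).
    assert (0 <= k * u n * (1 - u 0)) by (apply Rmult_le_pos; nra).
    unfold q in *. nra. }
  apply (Un_cv_0_geometric u q Hq).
  intros n. destruct (Hbound n) as [Hn Hgeo].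
  assert (q ^ n * u 0 <= q ^ n) by (pose proof (pow_le q n (proj1 Hq)); nra).
  lra.
Qed.

Lemma orbit_stays_in l h m : (forall x, l <= x <= h -> l <= g x <= h) ->
  l <= u m <= h -> forall n, (m <= n)%nat -> l <= u n <= h.
Proof.
  intros Hinv Hm n Hmn.
  induction Hmn as [|n _ IH]; [exact Hm|].
  rewrite u_succ. apply Hinv, IH.
Qed.

Lemma orbit_eventually_in l h : (forall x, l <= x <= h -> l <= g x <= h) ->
  (exists m, l <= u m <= h) ->
  exists n0 : nat, forall n : nat, (n > n0)%nat -> l <= u n <= h.
Proof.
  intros Hinv [m Hm]. exists m. intros n Hn.
  apply (orbit_stays_in l h m); auto with arith.
Qed.

Lemma orbit_enters_from_below l h e : 0 < e -> u 0 < l ->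
  (forall x, u 0 <= x < l -> x + e <= g x <= h) ->
  exists m, l <= u m <= h.
Proof.
  intros He Hl Hstep.
  destruct (classic (exists m, l <= u m <= h)) as [Hin|Hout]; [exact Hin|].
  assert (Hclimb : forall n, u 0 + INR n * e <= u n < l).
  { induction n as [|n IH]; [simpl; lra|].
    assert (0 <= INR n * e) by (apply Rmult_le_pos; [apply pos_INR | lra]).
    destruct (Hstep (u n)) as [Hup Hle]; [lra|].
    rewrite S_INR, u_succ.
    destruct (Rlt_or_le (g (u n)) l) as [Hlt|Hge]; [lra|].
    exfalso. apply Hout. exists (S n). rewrite u_succ. lra. }
  destruct (INR_archimed e (l - u 0) He) as [N HN].
  specialize (Hclimb N). lra.
Qed.

End Orbit.

Lemma orbit_cv1 (g : R -> R) (u : nat -> R) (u_succ : forall n, u (S n) = g (u n)) k :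
  0 < u 0%nat <= 1 -> 0 < k <= 1 ->
  (forall x, u 0%nat <= x <= 1 -> x + k * x * (1 - x) <= g x <= 1) ->
  Un_cv u 1.
Proof.
  intros Hu0 Hk Hstep.
  assert (Hmirror : Un_cv (fun n => 1 - u n) 0).
  { assert (Hsucc : forall n, 1 - u (S n) = 1 - g (1 - (1 - u n)))
      by (intros n; rewrite u_succ; f_equal; f_equal; ring).
    apply (orbit_cv0 (fun y => 1 - g (1 - y)) _ Hsucc k); cbn; [lra | lra |].
    intros y Hy. specialize (Hstep (1 - y) ltac:(lra)). nra. }
  intros eps Heps.
  destruct (Hmirror eps Heps) as [N HN]. exists N. intros n Hn.
  specialize (HN n Hn). unfold R_dist in *.
  replace (u n - 1) with (- (1 - u n - 0)) by ring.
  rewrite Rabs_Ropp. exact HN.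
Qed.

Lemma orbit_enters_from_above (g : R -> R) (u : nat -> R)
  (u_succ : forall n, u (S n) = g (u n)) l h e : 0 < e -> h < u 0%nat ->
  (forall x, h < x <= u 0%nat -> l <= g x <= x - e) ->
  exists m, l <= u m <= h.
Proof.
  intros He Hh Hstep.
  assert (Hsucc : forall n, - u (S n) = - g (- - u n))
    by (intros n; rewrite u_succ, Ropp_involutive; reflexivity).
  destruct (orbit_enters_from_below (fun y => - g (- y)) (fun n => - u n) Hsucc
              (- h) (- l) e) as [m Hm]; cbn; [lra | lra | | exists m; lra].
  intros y Hy. destruct (Hstep (- y)); lra.
Qed.

Lemma fabc_orbit_cv0 a b c p x0 : p < 1/2 -> 0 <= x0 < 1 ->
  (forall x, 0 <= x <= x0 -> 0 <= pval a b c x <= p) ->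
  Un_cv (fun n => fiter a b c n x0) 0.
Proof.
  intros Hp Hx0 Hact.
  assert (Hp0 : 0 <= p) by (pose proof (Hact 0 ltac:(lra)); lra).
  apply (orbit_cv0 (fabc a b c) _ (fun n => eq_refl) (1 - 2 * p)); cbn; [lra | lra |].
  intros x Hx. destruct (Hact x Hx) as [Hpx0 Hpx].
  rewrite fabc_qmap. split.
  - pose proof (qmap_ge_sq _ x Hpx0 ltac:(lra)). nra.
  - pose proof (qmap_le_param _ _ x Hpx ltac:(lra)) as Hle.
    rewrite (qmap_logistic p) in Hle. lra.
Qed.

Lemma fabc_orbit_cv1 a b c p x0 : 1/2 < p -> 0 < x0 <= 1 ->
  (forall x, x0 <= x <= 1 -> p <= pval a b c x <= 1) ->
  Un_cv (fun n => fiter a b c n x0) 1.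
Proof.
  intros Hp Hx0 Hact.
  assert (Hp1 : p <= 1) by (pose proof (Hact 1 ltac:(lra)); lra).
  apply (orbit_cv1 (fabc a b c) _ (fun n => eq_refl) (2 * p - 1)); cbn; [lra | lra |].
  intros x Hx. destruct (Hact x Hx) as [Hpx Hpx1].
  rewrite fabc_qmap. split.
  - pose proof (qmap_le_param _ _ x Hpx ltac:(lra)) as Hle.
    rewrite (qmap_logistic p) in Hle. lra.
  - apply qmap_le_1; lra.
Qed.

Lemma fabc_cv0_first_third a b c x0 : 0 <= a < 1/2 -> 0 <= x0 <= 1/3 ->
  Un_cv (fun n => fiter a b c n x0) 0.
Proof.
  intros Ha Hx0. apply (fabc_orbit_cv0 a b c a); [lra | lra |].
  intros x Hx. rewrite pval_first by lra. lra.
Qed.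

Lemma fabc_cv1_last_third a b c x0 : 1/2 < c <= 1 -> 2/3 <= x0 <= 1 ->
  Un_cv (fun n => fiter a b c n x0) 1.
Proof.
  intros Hc Hx0. apply (fabc_orbit_cv1 a b c c); [lra | lra |].
  intros x Hx. rewrite pval_last by lra. lra.
Qed.

Lemma fabc_cv0_first_two_thirds a b c x0 : 0 <= a < 1/2 -> 0 <= b < 1/2 ->
  0 <= x0 < 2/3 -> Un_cv (fun n => fiter a b c n x0) 0.
Proof.
  intros Ha Hb Hx0.
  pose proof (Rmax_l a b). pose proof (Rmax_r a b).
  apply (fabc_orbit_cv0 a b c (Rmax a b)); [apply Rmax_lub_lt; lra | lra |].
  intros x Hx. apply pval_ind; intros; lra.
Qed.

Lemma fabc_cv1_last_two_thirds a b c x0 : 1/2 < b <= 1 -> 1/2 < c <= 1 ->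
  1/3 < x0 <= 1 -> Un_cv (fun n => fiter a b c n x0) 1.
Proof.
  intros Hb Hc Hx0.
  pose proof (Rmin_l b c). pose proof (Rmin_r b c).
  apply (fabc_orbit_cv1 a b c (Rmin b c)); [apply Rmin_glb_lt; lra | lra |].
  intros x Hx. apply pval_ind; intros; lra.
Qed.

Lemma fabc_cv0_lt_half a b c x0 : 0 <= a < 1/2 -> 0 <= b < 1/2 -> 0 <= c < 1/2 ->
  0 <= x0 < 1 -> Un_cv (fun n => fiter a b c n x0) 0.
Proof.
  intros Ha Hb Hc Hx0.
  pose proof (Rmax_l a (Rmax b c)). pose proof (Rmax_r a (Rmax b c)).
  pose proof (Rmax_l b c). pose proof (Rmax_r b c).
  apply (fabc_orbit_cv0 a b c (Rmax a (Rmax b c))); [|lra|].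
  - apply Rmax_lub_lt; [|apply Rmax_lub_lt]; lra.
  - intros x Hx. apply pval_ind; intros; lra.
Qed.

Lemma fabc_cv1_gt_half a b c x0 : 1/2 < a <= 1 -> 1/2 < b <= 1 -> 1/2 < c <= 1 ->
  0 < x0 <= 1 -> Un_cv (fun n => fiter a b c n x0) 1.
Proof.
  intros Ha Hb Hc Hx0.
  pose proof (Rmin_l a (Rmin b c)). pose proof (Rmin_r a (Rmin b c)).
  pose proof (Rmin_l b c). pose proof (Rmin_r b c).
  apply (fabc_orbit_cv1 a b c (Rmin a (Rmin b c))); [|lra|].
  - apply Rmin_glb_lt; [|apply Rmin_glb_lt]; lra.
  - intros x Hx. apply pval_ind; intros; lra.
Qed.

Lemma fabc_A3_invariant a b c : 1/2 < b <= 1 -> 0 <= c < 1/2 ->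
  forall x, 4/9 * (1 + c) <= x <= 4/9 * (1 + b) ->
    4/9 * (1 + c) <= fabc a b c x <= 4/9 * (1 + b).
Proof.
  intros Hb Hc x Hx. rewrite fabc_qmap.
  destruct (Rlt_or_le x (2/3)) as [Hlt|Hge].
  - rewrite pval_mid by lra.
    destruct (qmap_up_branch b (2/3) x) as [Hup Hle]; [lra | lra | lra |].
    rewrite qmap_two_thirds in Hle. lra.
  - rewrite pval_last by lra.
    destruct (qmap_down_branch c (2/3) x) as [Hge' Hdown]; [lra | lra | lra |].
    rewrite qmap_two_thirds in Hge'. lra.
Qed.

Lemma fabc_A3_absorbing a b c x0 : 1/2 < b <= 1 -> 0 <= c < 1/2 ->
  (1/3 < x0 < 4/9 * (1 + c)) \/ (4/9 * (1 + b) < x0 < 1) ->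
  exists n0 : nat, forall n : nat, (n > n0)%nat ->
    4/9 * (1 + c) <= fiter a b c n x0 <= 4/9 * (1 + b).
Proof.
  intros Hb Hc Hx0.
  apply (orbit_eventually_in (fabc a b c) _ (fun n => eq_refl));
    [apply fabc_A3_invariant; assumption |].
  destruct Hx0 as [Hx0|Hx0].
  - apply (orbit_enters_from_below (fabc a b c) _ (fun n => eq_refl) _ _ ((2 * b - 1) * (1/3 * (1 - 2/3))));
      cbn; [lra | lra |].
    intros x Hx. rewrite fabc_qmap, pval_mid by lra. split.
    + apply qmap_ge_step; [lra|]. apply x_1mx_ge; lra.
    + rewrite <- qmap_two_thirds. apply qmap_le_mono; lra.
  - apply (orbit_enters_from_above (fabc a b c) _ (fun n => eq_refl) _ _
             ((1 - 2 * c) * (2/3 * (1 - x0)))); cbn; [nra | lra |].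
    intros x Hx. rewrite fabc_qmap, pval_last by lra. split.
    + rewrite <- qmap_two_thirds. apply qmap_le_mono; lra.
    + apply qmap_le_step; [lra|]. apply x_1mx_ge; lra.
Qed.

Lemma fabc_B2_invariant a b c : 1/2 < a <= 1 -> 0 <= b < 1/2 ->
  forall x, 1/9 * (1 + 4 * b) <= x <= 1/9 * (1 + 4 * a) ->
    1/9 * (1 + 4 * b) <= fabc a b c x <= 1/9 * (1 + 4 * a).
Proof.
  intros Ha Hb x Hx. rewrite fabc_qmap.
  destruct (Rle_or_lt x (1/3)) as [Hle|Hgt].
  - rewrite pval_first by lra.
    destruct (qmap_up_branch a (1/3) x) as [Hup Hle']; [lra | lra | lra |].
    rewrite qmap_third in Hle'. lra.
  - rewrite pval_mid by lra.
    destruct (qmap_down_branch b (1/3) x) as [Hge Hdown]; [lra | lra | lra |].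
    rewrite qmap_third in Hge. lra.
Qed.

Lemma fabc_B2_absorbing_below a b c x0 : 1/2 < a <= 1 -> 0 <= b < 1/2 ->
  0 < x0 < 1/9 * (1 + 4 * b) ->
  exists n0 : nat, forall n : nat, (n > n0)%nat ->
    1/9 * (1 + 4 * b) <= fiter a b c n x0 <= 1/9 * (1 + 4 * a).
Proof.
  intros Ha Hb Hx0.
  apply (orbit_eventually_in (fabc a b c) _ (fun n => eq_refl));
    [apply fabc_B2_invariant; assumption |].
  apply (orbit_enters_from_below (fabc a b c) _ (fun n => eq_refl) _ _
           ((2 * a - 1) * (x0 * (1 - 1/3)))); cbn; [nra | lra |].
  intros x Hx. rewrite fabc_qmap, pval_first by lra. split.
  - apply qmap_ge_step; [lra|]. apply x_1mx_ge; lra.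
  - rewrite <- qmap_third. apply qmap_le_mono; lra.
Qed.

Lemma fabc_B2_absorbing_above a b c p x0 : 1/2 < a <= 1 -> 0 <= b < 1/2 -> 0 <= c ->
  p < 1/2 -> 1/9 * (1 + 4 * a) < x0 < 1 ->
  (forall x, 1/3 < x <= x0 -> pval a b c x <= p) ->
  exists n0 : nat, forall n : nat, (n > n0)%nat ->
    1/9 * (1 + 4 * b) <= fiter a b c n x0 <= 1/9 * (1 + 4 * a).
Proof.
  intros Ha Hb Hc Hp Hx0 Hact.
  apply (orbit_eventually_in (fabc a b c) _ (fun n => eq_refl));
    [apply fabc_B2_invariant; assumption |].
  apply (orbit_enters_from_above (fabc a b c) _ (fun n => eq_refl) _ _
           ((1 - 2 * p) * (1/3 * (1 - x0)))); cbn; [nra | lra |].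
  intros x Hx. rewrite fabc_qmap. split.
  - destruct (Rlt_or_le x (2/3)) as [Hlt|Hge].
    + rewrite pval_mid, <- qmap_third by lra. apply qmap_le_mono; lra.
    + (* here [f x >= x^2 >= 4/9], which lies above B2 *)
      rewrite pval_last by lra. pose proof (qmap_ge_sq c x Hc ltac:(lra)). nra.
  - apply (Rle_trans _ (qmap p x)); [apply qmap_le_param; [apply Hact|]; lra|].
    apply qmap_le_step; [lra|]. apply x_1mx_ge; lra.
Qed.

Lemma fabc_B2_absorbing a b c x0 : 1/2 < a <= 1 -> 0 <= b < 1/2 -> 0 <= c < 1/2 ->
  (0 < x0 < 1/9 * (1 + 4 * b)) \/ (1/9 * (1 + 4 * a) < x0 < 1) ->
  exists n0 : nat, forall n : nat, (n > n0)%nat ->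
    1/9 * (1 + 4 * b) <= fiter a b c n x0 <= 1/9 * (1 + 4 * a).
Proof.
  intros Ha Hb Hc [Hx0|Hx0]; [apply fabc_B2_absorbing_below; lra |].
  pose proof (Rmax_l b c). pose proof (Rmax_r b c).
  apply (fabc_B2_absorbing_above a b c (Rmax b c)); [lra | lra | lra | | lra |].
  - apply Rmax_lub_lt; lra.
  - intros x Hx. apply pval_ind; intros; lra.
Qed.

Lemma fabc_B2_absorbing_first_two_thirds a b c x0 :
  1/2 < a <= 1 -> 0 <= b < 1/2 -> 0 <= c ->
  (0 < x0 < 1/9 * (1 + 4 * b)) \/ (1/9 * (1 + 4 * a) < x0 < 2/3) ->
  exists n0 : nat, forall n : nat, (n > n0)%nat ->
    1/9 * (1 + 4 * b) <= fiter a b c n x0 <= 1/9 * (1 + 4 * a).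
Proof.
  intros Ha Hb Hc [Hx0|Hx0]; [apply fabc_B2_absorbing_below; lra |].
  apply (fabc_B2_absorbing_above a b c b); [lra | lra | lra | lra | lra |].
  intros x Hx. rewrite pval_mid by lra. lra.
Qed.
Theorem theorem2p8 (a b c : R)
  (ha : 0 <= a <= 1) (hb : 0 <= b <= 1) (hc : 0 <= c <= 1)
  (ha2 : a <> 1/2) (hb2 : b <> 1/2) (hc2 : c <> 1/2) :
  (* 1 *)
  (forall x, 0 <= x <= 1 -> (fabc a b c x = x <-> x = 0 \/ x = 1)) /\
  (* 2 *)
  (a < 1/2 -> b < 1/2 -> c < 1/2 ->
     forall x0, 0 <= x0 < 1 -> Un_cv (fun n => fiter a b c n x0) 0) /\
  (* 3 *)
  (a < 1/2 -> b < 1/2 -> c > 1/2 ->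
     (forall x0, 0 <= x0 < 2/3 -> Un_cv (fun n => fiter a b c n x0) 0) /\
     (forall x0, 2/3 <= x0 <= 1 -> Un_cv (fun n => fiter a b c n x0) 1)) /\
  (* 4 *)
  (a < 1/2 -> b > 1/2 -> c < 1/2 ->
     forall x0, 0 <= x0 <= 1/3 -> Un_cv (fun n => fiter a b c n x0) 0) /\
  (* 5 *)
  (a < 1/2 -> b > 1/2 -> c < 1/2 ->
     (forall x0, 0 <= x0 <= 1/3 -> Un_cv (fun n => fiter a b c n x0) 0) /\
     (forall x0, (1/3 < x0 < 4/9 * (1 + c)) \/ (4/9 * (1 + b) < x0 < 1) ->
        exists n0 : nat, forall n : nat, (n > n0)%nat ->
          4/9 * (1 + c) <= fiter a b c n x0 <= 4/9 * (1 + b)) /\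
     (forall x, 4/9 * (1 + c) <= x <= 4/9 * (1 + b) ->
          4/9 * (1 + c) <= fabc a b c x <= 4/9 * (1 + b))) /\
  (* 6 *)
  (a < 1/2 -> b > 1/2 -> c > 1/2 ->
     (forall x0, 0 <= x0 <= 1/3 -> Un_cv (fun n => fiter a b c n x0) 0) /\
     (forall x0, 1/3 < x0 <= 1 -> Un_cv (fun n => fiter a b c n x0) 1)) /\
  (* 7 *)
  (a > 1/2 -> b < 1/2 -> c < 1/2 ->
     (forall x0, (0 < x0 < 1/9 * (1 + 4 * b)) \/ (1/9 * (1 + 4 * a) < x0 < 1) ->
        exists n0 : nat, forall n : nat, (n > n0)%nat ->
          1/9 * (1 + 4 * b) <= fiter a b c n x0 <= 1/9 * (1 + 4 * a)) /\
     (forall x, 1/9 * (1 + 4 * b) <= x <= 1/9 * (1 + 4 * a) ->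
          1/9 * (1 + 4 * b) <= fabc a b c x <= 1/9 * (1 + 4 * a))) /\
  (* 8 *)
  (a > 1/2 -> b < 1/2 -> c > 1/2 ->
     (forall x0, (0 < x0 < 1/9 * (1 + 4 * b)) \/ (1/9 * (1 + 4 * a) < x0 < 2/3) ->
        exists n0 : nat, forall n : nat, (n > n0)%nat ->
          1/9 * (1 + 4 * b) <= fiter a b c n x0 <= 1/9 * (1 + 4 * a)) /\
     (forall x, 1/9 * (1 + 4 * b) <= x <= 1/9 * (1 + 4 * a) ->
          1/9 * (1 + 4 * b) <= fabc a b c x <= 1/9 * (1 + 4 * a)) /\
     (forall x0, 2/3 <= x0 <= 1 -> Un_cv (fun n => fiter a b c n x0) 1)) /\
  (* 9 *)
  (a > 1/2 -> b > 1/2 -> c > 1/2 ->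
     forall x0, 0 < x0 <= 1 -> Un_cv (fun n => fiter a b c n x0) 1).
Proof.
  split; [intros x _; apply fabc_fixed_iff; assumption |].
  split; [intros; apply fabc_cv0_lt_half; lra |].
  split; [intros; split; intros;
          [apply fabc_cv0_first_two_thirds | apply fabc_cv1_last_third]; lra |].
  split; [intros; apply fabc_cv0_first_third; lra |].
  split.
  { intros; split; [|split]; intros;
      [apply fabc_cv0_first_third | apply fabc_A3_absorbing | apply fabc_A3_invariant]; lra. }
  split; [intros; split; intros;
          [apply fabc_cv0_first_third | apply fabc_cv1_last_two_thirds]; lra |].
  split.
  { intros; split; intros; [apply fabc_B2_absorbing | apply fabc_B2_invariant]; lra. }
  split.
  { intros; split; [|split]; intros;
      [apply fabc_B2_absorbing_first_two_thirds | apply fabc_B2_invariant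
      | apply fabc_cv1_last_third]; lra. }
  intros; apply fabc_cv1_gt_half; lra.
Qed.
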